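(* In the setting of the context, suppose the step-size satisfies $\alpha\in(0,\overline{\alpha})$, where $$\overline{\alpha}=\min\left\{\frac{\sqrt{\Delta^2+4ns(1-\sigma)^2cd\epsilon l^2yy_-^2(l+ns)}-\Delta}{2cd\epsilon l^2yy_-^2(l+ns)},\ \frac{1}{nl}\right\},\qquad \Delta=nscd\epsilon ly_-(1-\sigma+\tau).$$ Then for all $k\ge0$: (a) with $\Gamma_1=\frac{1}{\gamma_1}\sqrt{(\alpha ly_-T)^2+(\alpha yl+2)^2(d\epsilon ly_-^2T)^2}\in(0,\infty)$ we have $\|H_k\|_2=\Gamma_1\gamma_1^k$; (b) there exist $0<\gamma_2<1$ and $0<\Gamma_2<\infty$ such that $\|G^k\|_2\le\Gamma_2\gamma_2^k$; (c) with $\gamma=\max\{\gamma_1,\gamma_2\}$ and $\Gamma=\Gamma_1\Gamma_2/\gamma$, for all $0\le r\le k-1$, $\|G^{k-r-1}H_r\|_2\le\Gamma\gamma^k$.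
   Context: Let $n,p\ge1$, $\mathcal{G}$ a strongly-connected directed graph on $\{1,\dots,n\}$, $\underline{A}=(a_{ij})\in\mathbb{R}^{n\times n}$ with $a_{ij}>0$ if $i$ is an out-neighbor of $j$ or $i=j$, $a_{ij}=0$ otherwise, and columns summing to $1$; $A=\underline{A}\otimes I_p$, $A_\infty=\lim_kA^k$; $\mathbf{y}_k=\underline{A}^k\mathbf{1}_n$, $Y_k=\mathrm{diag}(\mathbf{y}_k)\otimes I_p$, $Y_\infty=\lim_kY_k$. Let $l,s>0$ be the Lipschitz-gradient and strong-convexity constants of differentiable local functions $f_i:\mathbb{R}^p\to\mathbb{R}$ (i.e. $\|\nabla f_i(\mathbf{z}_1)-\nabla f_i(\mathbf{z}_2)\|_2\le l\|\mathbf{z}_1-\mathbf{z}_2\|_2$ and $f_i(\mathbf{z}_1)-f_i(\mathbf{z}_2)\le\nabla f_i(\mathbf{z}_1)^\top(\mathbf{z}_1-\mathbf{z}_2)-\frac s2\|\mathbf{z}_1-\mathbf{z}_2\|_2^2$). Constants: $\tau=\|A-I_{np}\|_2$, $\epsilon=\|I_{np}-A_\infty\|_2$, $\eta=\max(|1-n\alpha l|,|1-n\alpha s|)$, $y=\sup_k\|Y_k\|_2$, $y_-=\sup_k\|Y_k^{-1}\|_2$; $\gamma_1\in(0,1)$, $T\in(0,\infty)$ are constants with $\|Y_k-Y_\infty\|_2\le T\gamma_1^k$ for all $k\ge0$; $|||\cdot|||$ is a matrix norm on $\mathbb{R}^{np\times np}$ with compatible vector norm $\|\cdot\|$ such that $\sigma:=|||A-A_\infty|||<1$;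 $c,d>0$ satisfy $\|\mathbf{v}\|_2\le c\|\mathbf{v}\|$ and $\|\mathbf{v}\|\le d\|\mathbf{v}\|_2$. Matrices: $$G=\begin{bmatrix}\sigma&0&\alpha\\ \alpha cly_-&\eta&0\\ cd\epsilon ly_-(\tau+\alpha lyy_-)&\alpha d\epsilon l^2yy_-&\sigma+\alpha cd\epsilon ly_-\end{bmatrix},\quad H_k=\begin{bmatrix}0&0&0\\ \alpha ly_-T\gamma_1^{k-1}&0&0\\ (\alpha ly+2)d\epsilon ly_-^2T\gamma_1^{k-1}&0&0\end{bmatrix}.$$ $\|\cdot\|_2$ on matrices is the spectral norm. *)

From HB Require Import structures.
From mathcomp Require Import all_boot all_order all_algebra.
From mathcomp Require Import all_classical all_reals all_analysis.
From mathcomp Require Export mxtens.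
Set Implicit Arguments. Unset Strict Implicit. Unset Printing Implicit Defensive.
Import Order.TTheory GRing.Theory Num.Theory.
Import numFieldNormedType.Exports.
Local Open Scope classical_set_scope.
Local Open Scope ring_scope.

Section Defs.
Variable R : realType.

Definition norm2 {m : nat} (v : 'cV[R]_m) : R := Num.sqrt (\sum_i v i 0 ^+ 2).

Definition dotv {m : nat} (u v : 'cV[R]_m) : R := \sum_i u i 0 * v i 0.

Definition specnorm {m n : nat} (M : 'M[R]_(m, n)) : R :=
  sup [set norm2 (M *m v) | v in [set v : 'cV[R]_n | norm2 v <= 1]].

Definition mx3 (a11 a12 a13 a21 a22 a23 a31 a32 a33 : R) : 'M[R]_3 :=
  \matrix_(i < 3, j < 3)
    nth 0 (nth [::] [:: [:: a11; a12; a13]; [:: a21; a22; a23];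
                        [:: a31; a32; a33]] i) j.

Definition is_vnorm {N : nat} (nv : 'cV[R]_N -> R) : Prop :=
  [/\ forall v, 0 <= nv v,
      forall v, nv v = 0 -> v = 0,
      forall (a : R) v, nv (a *: v) = `|a| * nv v &
      forall u v, nv (u + v) <= nv u + nv v].

Definition is_mxnorm {N : nat} (nm : 'M[R]_N -> R) : Prop :=
  [/\ forall M, 0 <= nm M,
      forall M, nm M = 0 -> M = 0,
      forall (a : R) M, nm (a *: M) = `|a| * nm M,
      forall M M', nm (M + M') <= nm M + nm M' &
      forall M M', nm (M *m M') <= nm M * nm M'].

Definition compatible_norms {N : nat} (nm : 'M[R]_N -> R) (nv : 'cV[R]_N -> R) :=
  forall M v, nv (M *m v) <= nm M * nv v.

End Defs.

From HB Require Import structures.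
From mathcomp Require Import all_boot all_order all_algebra.
From mathcomp Require Import all_classical all_reals all_analysis.
From mathcomp Require Import ring lra.
Import Order.TTheory GRing.Theory Num.Theory.
Import numFieldNormedType.Exports.
Local Open Scope classical_set_scope.
Local Open Scope ring_scope.

Set Implicit Arguments. Unset Strict Implicit.

(* (a) [H k] has a single nonzero column, so its spectral norm is the length
   of that column, a fixed multiple of [gamma1 ^+ k].
   (b) [G] is entrywise nonnegative, and a nonnegative matrix with a positive
   vector [w] such that [G w < w] entrywise contracts the max-norm weighted by
   [w], which is equivalent to the Euclidean norm. For
   [G = mx3 sigma 0 alpha a eta 0 b c' (sigma + e)] the solution of
   [G w = w - 1] is such a vector as soon as
   [(1 - sigma) (1 - eta) (1 - sigma - e) > alpha b (1 - eta) + alpha a c'].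
   Since [s <= l] (for any l-smooth s-strongly convex function) and
   [alpha < 1 / (n l)], we have [eta = 1 - n alpha s], and the condition becomes
   [alpha (n s (1 - sigma)^2 - alpha Delta - alpha^2 K) > 0], i.e. [alpha] lies
   below the positive root of this quadratic.
   (c) Chain the two bounds, absorbing both rates into their maximum. *)

Section Norm2.
Variables (R : realType) (m : nat).
Implicit Types u v : 'cV[R]_m.

Lemma ler_term_sum (F : 'I_m -> R) i : (forall j, 0 <= F j) -> F i <= \sum_j F j.
Proof. by move=> F0; rewrite (bigD1 i) //= lerDl sumr_ge0. Qed.

Lemma norm2_ge0 v : 0 <= norm2 v.
Proof. exact: sqrtr_ge0. Qed.

Lemma sqr_norm2 v : norm2 v ^+ 2 = \sum_i v i 0 ^+ 2.
Proof. by rewrite sqr_sqrtr // sumr_ge0 // => i _; exact: sqr_ge0. Qed.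

Lemma norm2_0 : norm2 (0 : 'cV[R]_m) = 0.
Proof. by rewrite /norm2 big1 ?sqrtr0 // => i _; rewrite mxE expr0n. Qed.

Lemma norm2N v : norm2 (- v) = norm2 v.
Proof. by rewrite /norm2; congr Num.sqrt; apply: eq_bigr => i _; rewrite mxE sqrrN. Qed.

Lemma abs_coord_le_norm2 v i : `|v i 0| <= norm2 v.
Proof.
rewrite -sqrtr_sqr ler_wsqrtr // ler_term_sum // => j; exact: sqr_ge0.
Qed.

Lemma norm2_le_sum_abs v : norm2 v <= \sum_i `|v i 0|.
Proof.
have S0 : 0 <= \sum_i `|v i 0| by exact: sumr_ge0.
rewrite -(ger0_norm S0) -sqrtr_sqr ler_wsqrtr // expr2 mulr_suml.
apply: ler_sum => i _; rewrite -real_normK ?num_real // expr2.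
by rewrite ler_wpM2l // ler_term_sum.
Qed.

Lemma dotvN u v : dotv u (- v) = - dotv u v.
Proof. by rewrite /dotv -sumrN; apply: eq_bigr => i _; rewrite mxE mulrN. Qed.

Lemma dotvBl u w v : dotv (u - w) v = dotv u v - dotv w v.
Proof. by rewrite /dotv -sumrB; apply: eq_bigr => i _; rewrite !mxE mulrBl. Qed.

Lemma dotv_le_sqr_norm2 u v a :
  2 * a * dotv u v <= norm2 u ^+ 2 + a ^+ 2 * norm2 v ^+ 2.
Proof.
rewrite !sqr_norm2 -subr_ge0.
have -> : \sum_i u i 0 ^+ 2 + a ^+ 2 * \sum_i v i 0 ^+ 2 - 2 * a * dotv u v =
          \sum_i (u i 0 - a * v i 0) ^+ 2.
  by rewrite /dotv !mulr_sumr -big_split -sumrB /=; apply: eq_bigr => i _; ring.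
by apply: sumr_ge0 => i _; exact: sqr_ge0.
Qed.

End Norm2.

Lemma sup_ge0 (R : realType) (E : set R) x0 :
  E x0 -> (forall x, E x -> 0 <= x) -> 0 <= sup E.
Proof.
move=> Ex0 E0; have [ubE|] := pselect (has_ubound E).
  exact: le_trans (E0 _ Ex0) (ub_le_sup ubE Ex0).
by move=> nubE; rewrite sup_out // => -[].
Qed.

Section Specnorm.
Variables (R : realType) (m k : nat) (M : 'M[R]_(m, k)).

Lemma specnorm_ge0 : 0 <= specnorm M.
Proof.
apply: (@sup_ge0 _ _ 0); first by exists 0; rewrite //= ?mulmx0 norm2_0.
by move=> _ [v _ <-]; exact: norm2_ge0.
Qed.

Hypotheses (B : R) (B0 : 0 <= B) (MB : forall v, norm2 (M *m v) <= B * norm2 v).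

Lemma specnorm_le : specnorm M <= B.
Proof.
apply: ge_sup; first by exists (norm2 (M *m 0)), 0; rewrite //= norm2_0.
by move=> _ [v /= v1 <-]; rewrite (le_trans (MB v)) // ler_piMr.
Qed.

Lemma specnorm_attained v : norm2 v <= 1 -> norm2 (M *m v) = B -> specnorm M = B.
Proof.
move=> v1 MvB; apply/le_anti; rewrite specnorm_le -{1}MvB.
apply: ub_le_sup; last by exists v.
by exists B => _ [w /= w1 <-]; rewrite (le_trans (MB w)) // ler_piMr.
Qed.

End Specnorm.

Lemma specnorm_pow_mulmx_le (R : realType) m (M : 'M[R]_m) (N : nat -> 'M[R]_m)
    (g1 g2 C1 C2 : R) :
  0 < g1 -> 0 < g2 -> 0 <= C1 -> 0 <= C2 ->
  (forall r v, norm2 (N r *m v) <= C1 * g1 ^+ r * norm2 v) ->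
  (forall k v, norm2 (M ^+ k *m v) <= C2 * g2 ^+ k * norm2 v) ->
  forall k r, (r < k)%N ->
    specnorm (M ^+ (k - r - 1) *m N r) <= C1 * C2 / Num.max g1 g2 * Num.max g1 g2 ^+ k.
Proof.
move=> g1_gt0 g2_gt0 C1_ge0 C2_ge0 N_le M_le k r r_lt_k.
set g := Num.max g1 g2.
have [g1g g2g] : g1 <= g /\ g2 <= g by rewrite !le_max !lexx orbT.
have g_gt0 : 0 < g := lt_le_trans g1_gt0 g1g.
have [g_ge0 g1_ge0 g2_ge0] := And3 (ltW g_gt0) (ltW g1_gt0) (ltW g2_gt0).
have [j ->] : exists j, k = (j + r).+1 by exists (k - r.+1)%N; rewrite -addnS subnK.
rewrite -addSn addnK subn1 /=.
have -> : C1 * C2 / g * g ^+ (j.+1 + r) = C2 * g ^+ j * (C1 * g ^+ r).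
  by rewrite exprD exprS; field; rewrite gt_eqF.
apply: specnorm_le => [|v]; first by rewrite !mulr_ge0 ?exprn_ge0.
rewrite -mulmxA (le_trans (M_le j _)) //.
rewrite (le_trans (ler_wpM2l _ (N_le r v))) ?mulr_ge0 ?exprn_ge0 //.
rewrite [X in X <= _]mulrA ler_wpM2r ?norm2_ge0 //.
apply: ler_pM; rewrite ?mulr_ge0 ?exprn_ge0 // ler_wpM2l //.
  by apply: lerXn2r; rewrite ?nnegrE.
by apply: lerXn2r; rewrite ?nnegrE.
Qed.

Section NonnegDecay.
Variables (R : realType) (m : nat) (M : 'M[R]_m.+1).
Hypothesis M_ge0 : forall i j, 0 <= M i j.

Lemma abs_pow_mulmx_le (w v : 'cV[R]_m.+1) lam :
  0 <= lam -> (forall i, (M *m w) i 0 <= lam * w i 0) ->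
  (forall i, `|v i 0| <= w i 0) ->
  forall k i, `|(M ^+ k *m v) i 0| <= lam ^+ k * w i 0.
Proof.
move=> lam0 Mw vw; elim=> [|k IH] i; first by rewrite expr0 mul1mx mul1r.
rewrite exprS -mulmxE -mulmxA mxE exprSr -mulrA.
apply: le_trans (ler_norm_sum _ _ _) _.
apply: (@le_trans _ _ (\sum_j M i j * (lam ^+ k * w j 0))).
  by apply: ler_sum => j _; rewrite normrM ger0_norm // ler_wpM2l.
have -> : \sum_j M i j * (lam ^+ k * w j 0) = lam ^+ k * (M *m w) i 0.
  by rewrite mxE mulr_sumr; apply: eq_bigr => j _; rewrite mulrCA.
by rewrite ler_wpM2l ?exprn_ge0.
Qed.

Lemma nonneg_mx_geometric_decay (w : 'cV[R]_m.+1) :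
  (forall i, 0 < w i 0) -> (forall i, (M *m w) i 0 < w i 0) ->
  exists2 lam, 0 < lam < 1 & exists2 C, 0 < C &
    forall k v, norm2 (M ^+ k *m v) <= C * lam ^+ k * norm2 v.
Proof.
move=> w0 Mw1.
have w_ge0 j : 0 <= w j 0 by exact/ltW.
have winv_ge0 j : 0 <= (w j 0)^-1 by rewrite invr_ge0.
(* the largest ratio [(M w)_i / w_i], kept above [1/2] to make it positive *)
set lam := \big[Num.max/2^-1]_i ((M *m w) i 0 / w i 0).
have lam_gt0 : 0 < lam by rewrite (lt_le_trans _ (bigmax_ge_id _ _ _ _)) ?invr_gt0.
have lam0 := ltW lam_gt0.
have Mw i : (M *m w) i 0 <= lam * w i 0 by rewrite -ler_pdivrMr // le_bigmax.
exists lam.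
  by rewrite lam_gt0 /=; apply: bigmax_lt => [|i _]; rewrite ?invf_lt1 ?ltr1n // ltr_pdivrMr ?mul1r.
set S := \sum_i (w i 0)^-1.
have S0 : 0 < S by rewrite (lt_le_trans _ (ler_term_sum 0 winv_ge0)) ?invr_gt0.
exists ((\sum_i w i 0) * S).
  by rewrite mulr_gt0 // (lt_le_trans (w0 0) (ler_term_sum 0 w_ge0)).
move=> k v; set a := norm2 v * S.
have a0 : 0 <= a by rewrite mulr_ge0 ?norm2_ge0 ?(ltW S0).
have vw i : `|v i 0| <= (a *: w) i 0.
  rewrite mxE (le_trans (abs_coord_le_norm2 v i)) // -mulrA ler_peMr ?norm2_ge0 //.
  by rewrite -ler_pdivrMr // mul1r ler_term_sum.
have aMw i : (M *m (a *: w)) i 0 <= lam * (a *: w) i 0.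
  by have := Mw i; rewrite -scalemxAr !mxE mulrCA => Mwi; rewrite ler_wpM2l.
apply: le_trans (norm2_le_sum_abs _) _.
apply: le_trans (ler_sum _ (fun i _ => abs_pow_mulmx_le lam0 aMw vw k i)) _.
rewrite -mulr_sumr; under eq_bigr do rewrite mxE.
suff -> : lam ^+ k * \sum_i a * w i 0 = (\sum_i w i 0) * S * lam ^+ k * norm2 v by [].
by rewrite -mulr_sumr /a; ring.
Qed.

End NonnegDecay.

Section Mx3.
Variable R : realType.

Lemma norm2_mx3_col0 (a b : R) v :
  norm2 (mx3 0 0 0 a 0 0 b 0 0 *m v) = `|v ord0 0| * Num.sqrt (a ^+ 2 + b ^+ 2).
Proof.
rewrite /norm2 !big_ord_recl big_ord0 !mxE !big_ord_recl !big_ord0 /= !mxE /=.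
by rewrite -sqrtr_sqr -sqrtrM ?sqr_ge0 //; congr Num.sqrt; ring.
Qed.

Lemma specnorm_mx3_col0 (a b : R) :
  specnorm (mx3 0 0 0 a 0 0 b 0 0) = Num.sqrt (a ^+ 2 + b ^+ 2).
Proof.
have MB v : norm2 (mx3 0 0 0 a 0 0 b 0 0 *m v) <= Num.sqrt (a ^+ 2 + b ^+ 2) * norm2 v.
  by rewrite norm2_mx3_col0 mulrC ler_wpM2l ?sqrtr_ge0 ?abs_coord_le_norm2.
apply: (specnorm_attained (sqrtr_ge0 _) MB (v := delta_mx ord0 0)).
  by rewrite /norm2 !big_ord_recl big_ord0 !mxE /= expr1n expr0n /= !addr0 sqrtr1.
by rewrite norm2_mx3_col0 mxE /= normr1 mul1r.
Qed.

Lemma mx3_col0_geometric (u v g : R) : 0 < u -> 0 < g ->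
  let C := g^-1 * Num.sqrt (u ^+ 2 + v ^+ 2) in
  let M k := mx3 0 0 0 (u * (g ^+ k / g)) 0 0 (v * (g ^+ k / g)) 0 0 in
  [/\ 0 < C, forall k, specnorm (M k) = C * g ^+ k &
      forall k w, norm2 (M k *m w) <= C * g ^+ k * norm2 w].
Proof.
move=> u_gt0 g_gt0 C M.
have C_gt0 : 0 < C.
  rewrite mulr_gt0 ?invr_gt0 // sqrtr_gt0 (lt_le_trans (exprn_gt0 2 u_gt0)) //.
  by rewrite lerDl sqr_ge0.
have scaleE x : 0 <= x ->
    Num.sqrt ((u * x) ^+ 2 + (v * x) ^+ 2) = x * Num.sqrt (u ^+ 2 + v ^+ 2).
  move=> x_ge0; rewrite !exprMn -mulrDl sqrtrM ?addr_ge0 ?sqr_ge0 //.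
  by rewrite sqrtr_sqr ger0_norm // mulrC.
have CgE k : Num.sqrt ((u * (g ^+ k / g)) ^+ 2 + (v * (g ^+ k / g)) ^+ 2) = C * g ^+ k.
  by rewrite scaleE ?divr_ge0 ?exprn_ge0 ?(ltW g_gt0) // /C; ring.
split=> // [k|k w]; first by rewrite specnorm_mx3_col0 CgE.
rewrite norm2_mx3_col0 CgE mulrC ler_wpM2l ?abs_coord_le_norm2 //.
exact: mulr_ge0 (ltW C_gt0) (exprn_ge0 _ (ltW g_gt0)).
Qed.

Lemma mx3_subinvariant (sg al a et b c' e : R) :
  sg < 1 -> 0 < al -> 0 <= a -> et < 1 -> 0 <= b -> 0 <= c' -> 0 <= e ->
  0 < (1 - sg) * (1 - et) * (1 - sg - e) - al * b * (1 - et) - al * a * c' ->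
  exists2 w : 'cV[R]_3, forall i, 0 < w i 0 &
    forall i, (mx3 sg 0 al a et 0 b c' (sg + e) *m w) i 0 < w i 0.
Proof.
move=> sg1 al0 a0 et1 b0 c0 e0 D0; set D := _ - _ - _ in D0.
have sg' : 0 < 1 - sg by rewrite subr_gt0.
have et' : 0 < 1 - et by rewrite subr_gt0.
have ab0 := mulr_ge0 (mulr_ge0 (ltW al0) b0) (ltW et').
have ac0 := mulr_ge0 (mulr_ge0 (ltW al0) a0) c0.
have sge : 0 < 1 - sg - e.
  by rewrite -(pmulr_rgt0 _ (mulr_gt0 sg' et')) /D; rewrite /D in D0; lra.
(* [w] is the solution of [G w = w - 1] *)
set N := al * (1 - et) + al * c' + (1 - sg - e) * (1 - et).
set d1 := N / D; set d2 := (1 + a * d1) / (1 - et); set d3 := ((1 - sg) * d1 - 1) / al.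
have d1_gt0 : 0 < d1.
  rewrite divr_gt0 // /N.
  have := mulr_gt0 al0 et'; have := mulr_gt0 sge et'; have := mulr_ge0 (ltW al0) c0.
  lra.
have d3_gt0 : 0 < d3.
  rewrite divr_gt0 // subr_gt0 /d1 mulrA ltr_pdivlMr // mul1r.
  have -> : (1 - sg) * N = D + ((1 - sg) * al * (1 - et) + (1 - sg) * al * c'
                               + al * b * (1 - et) + al * a * c') by rewrite /D /N; ring.
  have := mulr_gt0 (mulr_gt0 sg' al0) et'; have := mulr_ge0 (mulr_ge0 (ltW sg') (ltW al0)) c0.
  lra.
exists (\col_i nth 0 [:: d1; d2; d3] i).
  case=> [[|[|[|//]]] ?]; rewrite mxE //= divr_gt0 //.
  by have := mulr_ge0 a0 (ltW d1_gt0); lra.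
have [Dn0 etn0 aln0] : [/\ D != 0, 1 - et != 0 & al != 0] by rewrite !gt_eqF.
have Gw i : (mx3 sg 0 al a et 0 b c' (sg + e) *m \col_i nth 0 [:: d1; d2; d3] i) i 0
            = nth 0 [:: d1; d2; d3] i - 1.
  rewrite mxE !big_ord_recl big_ord0 !mxE /=.
  by case: i => [[|[|[|//]]] ?] /=; rewrite /d3 /d2 /d1 /N /D; field;
    rewrite ?Dn0 ?aln0 ?etn0.
by move=> i; rewrite Gw mxE ltrBlDr ltrDl.
Qed.

End Mx3.

Lemma sconvex_modulus_le_lipschitz (R : realType) p (f : 'cV[R]_p -> R)
    (g : 'cV[R]_p -> 'cV[R]_p) (l s : R) :
  (0 < p)%N -> 0 < l ->
  (forall z1 z2, norm2 (g z1 - g z2) <= l * norm2 (z1 - z2)) ->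
  (forall z1 z2, f z1 - f z2 <= dotv (g z1) (z1 - z2) - s / 2 * norm2 (z1 - z2) ^+ 2) ->
  s <= l.
Proof.
move=> p_gt0 l_gt0 g_lip f_sconvex; set z : 'cV[R]_p := const_mx 1.
have z_gt0 : 0 < norm2 z ^+ 2.
  rewrite sqr_norm2 (eq_bigr (fun=> 1)) => [|i _]; last by rewrite mxE expr1n.
  by rewrite sumr_const card_ord ltr0n.
(* adding the two strong-convexity inequalities between [z] and [0] *)
have g_mono : s * norm2 z ^+ 2 <= dotv (g z - g 0) z.
  have := f_sconvex z 0; have := f_sconvex 0 z.
  rewrite subr0 sub0r norm2N dotvN dotvBl; lra.
have g_lip2 : norm2 (g z - g 0) ^+ 2 <= l ^+ 2 * norm2 z ^+ 2.
  have := g_lip z 0; rewrite subr0 -exprMn => lip.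
  by apply: lerXn2r; rewrite // nnegrE ?mulr_ge0 ?norm2_ge0 ?(ltW l_gt0).
have g_mono2 : 2 * l * (s * norm2 z ^+ 2) <= 2 * l * dotv (g z - g 0) z.
  by rewrite ler_pM2l ?mulr_gt0.
have g_amgm := dotv_le_sqr_norm2 (g z - g 0) z l.
have : 2 * l * (s * norm2 z ^+ 2) <= 2 * l * (l * norm2 z ^+ 2) by lra.
by rewrite ler_pM2l ?mulr_gt0 // ler_pM2r.
Qed.

Lemma quadratic_gt0_below_root (R : realType) (K D P x : R) :
  0 < K -> 0 <= D -> 0 <= P -> 0 <= x ->
  x < (Num.sqrt (D ^+ 2 + 4 * P * K) - D) / (2 * K) -> 0 < P - x * D - x ^+ 2 * K.
Proof.
move=> K_gt0 D_ge0 P_ge0 x_ge0; rewrite ltr_pdivlMr ?mulr_gt0 //.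
set S := Num.sqrt _ => xS.
have S2 : S ^+ 2 = D ^+ 2 + 4 * P * K.
  by rewrite sqr_sqrtr // addr_ge0 ?sqr_ge0 // !mulr_ge0 ?(ltW K_gt0).
have : 0 < S ^+ 2 - (2 * K * x + D) ^+ 2.
  have Kx_ge0 := mulr_ge0 (ltW K_gt0) x_ge0.
  by rewrite subr_sqr mulr_gt0 //; lra.
rewrite (_ : _ - _ = 4 * K * (P - x * D - x ^+ 2 * K)); last by rewrite S2; ring.
by rewrite pmulr_rgt0 ?mulr_gt0.
Qed.

Section StepSize.
Variables (R : realType) (nR l s sigma tau eps y ym c d alpha : R).
Hypotheses (nR_gt0 : 0 < nR) (s_gt0 : 0 < s) (s_le_l : s <= l).
Hypotheses (sigma_ge0 : 0 <= sigma) (sigma_lt1 : sigma < 1) (tau_ge0 : 0 <= tau).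
Hypotheses (eps_ge0 : 0 <= eps) (y_ge0 : 0 <= y) (ym_ge0 : 0 <= ym).
Hypotheses (c_gt0 : 0 < c) (d_gt0 : 0 < d) (alpha_gt0 : 0 < alpha).
Hypothesis alpha_lt_inv : alpha < 1 / (nR * l).

Let l_gt0 : 0 < l := lt_le_trans s_gt0 s_le_l.
Let pos_ge0 := And5 (ltW nR_gt0) (ltW s_gt0) (ltW l_gt0) (ltW c_gt0) (ltW d_gt0).

Let Delta := nR * s * c * d * eps * l * ym * (1 - sigma + tau).
Let K := c * d * eps * l ^+ 2 * y * ym ^+ 2 * (l + nR * s).

Hypothesis alpha_lt_root :
  alpha < (Num.sqrt (Delta ^+ 2 + 4 * nR * s * (1 - sigma) ^+ 2 * K) - Delta) / (2 * K).

Lemma stepsize_K_gt0 : 0 < K.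
Proof.
have [nR_ge0 s_ge0 l_ge0 c_ge0 d_ge0] := pos_ge0.
have K_ge0 : 0 <= K by rewrite !(mulr_ge0, addr_ge0, exprn_ge0).
(* for [K = 0] the bound on [alpha] is a division by zero, hence [0] *)
rewrite lt_def K_ge0 andbT; apply: contraTneq alpha_lt_root => ->.
by rewrite !mulr0 invr0 mulr0 -leNgt ltW.
Qed.

Lemma stepsize_ym_gt0 : 0 < ym.
Proof.
rewrite lt_def ym_ge0 andbT; apply: contraTneq stepsize_K_gt0 => ym0.
by rewrite /K ym0 expr0n /= mulr0 mul0r ltxx.
Qed.

Lemma stepsize_lt1 : nR * alpha * l < 1.
Proof. by move: alpha_lt_inv; rewrite ltr_pdivlMr ?mulr_gt0 // mulrCA mulrA. Qed.

Lemma stepsize_eta :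
  Num.max `|1 - nR * alpha * l| `|1 - nR * alpha * s| = 1 - nR * alpha * s.
Proof.
have nal := stepsize_lt1.
have nas : nR * alpha * s <= nR * alpha * l by rewrite ler_pM2l ?mulr_gt0.
rewrite !ger0_norm ?subr_ge0 ?(ltW nal) ?(le_trans nas (ltW nal)) //.
by apply/max_idPr; rewrite lerD2l lerN2.
Qed.

Lemma stepsize_margin : 0 < nR * s * (1 - sigma) ^+ 2 - alpha * Delta - alpha ^+ 2 * K.
Proof.
have [nR_ge0 s_ge0 l_ge0 c_ge0 d_ge0] := pos_ge0.
have sigma_tau : 0 <= 1 - sigma + tau by rewrite addr_ge0 // subr_ge0 ltW.
apply: quadratic_gt0_below_root; rewrite ?stepsize_K_gt0 ?(ltW alpha_gt0) //.
- by rewrite /Delta !(mulr_ge0, exprn_ge0).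
- exact: mulr_ge0 (mulr_ge0 nR_ge0 s_ge0) (sqr_ge0 _).
by move: alpha_lt_root; rewrite !mulrA.
Qed.

Lemma stepsize_contraction :
  exists2 gamma2, 0 < gamma2 < 1 & exists2 Gamma2, 0 < Gamma2 &
    forall k v, norm2 (mx3 sigma 0 alpha
      (alpha * c * l * ym) (Num.max `|1 - nR * alpha * l| `|1 - nR * alpha * s|) 0
      (c * d * eps * l * ym * (tau + alpha * l * y * ym))
        (alpha * d * eps * l ^+ 2 * y * ym)
        (sigma + alpha * c * d * eps * l * ym) ^+ k *m v)
    <= Gamma2 * gamma2 ^+ k * norm2 v.
Proof.
have [nR_ge0 s_ge0 l_ge0 c_ge0 d_ge0] := pos_ge0.
have alpha_ge0 := ltW alpha_gt0.
have nas_gt0 : 0 < nR * alpha * s by rewrite !mulr_gt0.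
have eta_ge0 : 0 <= 1 - nR * alpha * s.
  by rewrite subr_ge0 (le_trans _ (ltW stepsize_lt1)) // ler_pM2l ?mulr_gt0.
rewrite stepsize_eta; set G := mx3 _ _ _ _ _ _ _ _ _.
have G_ge0 i j : 0 <= G i j.
  rewrite mxE; case: i j => [[|[|[|//]]] ?] [[|[|[|//]]] ?] /=;
    by rewrite ?eta_ge0 ?(mulr_ge0, addr_ge0, exprn_ge0).
have [w w_gt0 Gw] : exists2 w : 'cV[R]_3, forall i, 0 < w i 0 & forall i, (G *m w) i 0 < w i 0.
  apply: mx3_subinvariant; rewrite ?(mulr_ge0, addr_ge0, exprn_ge0) //.
    by rewrite ltrBlDr ltrDl.
  have -> : (1 - sigma) * (1 - (1 - nR * alpha * s)) * (1 - sigma - alpha * c * d * eps * l * ym)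
      - alpha * (c * d * eps * l * ym * (tau + alpha * l * y * ym)) * (1 - (1 - nR * alpha * s))
      - alpha * (alpha * c * l * ym) * (alpha * d * eps * l ^+ 2 * y * ym)
      = alpha * (nR * s * (1 - sigma) ^+ 2 - alpha * Delta - alpha ^+ 2 * K).
    by rewrite /Delta /K; ring.
  by rewrite mulr_gt0 ?stepsize_margin.
exact (nonneg_mx_geometric_decay G_ge0 w_gt0 Gw).
Qed.

End StepSize.

Theorem lemma5 (R : realType) (n p : nat) (e : rel 'I_n)
  (Abar : 'M[R]_n)
  (f : 'I_n -> 'cV[R]_p -> R) (gradf : 'I_n -> 'cV[R]_p -> 'cV[R]_p)
  (l s : R)
  (Ainf : 'M[R]_(n * p)) (Yinf : 'M[R]_(n * p))
  (gamma1 T : R)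
  (mnorm : 'M[R]_(n * p) -> R) (vnorm : 'cV[R]_(n * p) -> R)
  (c d alpha : R) :
  (0 < n)%N -> (0 < p)%N ->
  (* strongly connected digraph; e j i : there is an edge j -> i,
     i.e. i is an out-neighbour of j *)
  (forall i j, connect e i j) ->
  (forall i j, (e j i || (i == j)) -> 0 < Abar i j) ->
  (forall i j, ~~ (e j i || (i == j)) -> Abar i j = 0) ->
  (forall j, \sum_i Abar i j = 1) ->
  let A : 'M[R]_(n * p) := Abar *t (1%:M : 'M[R]_p) in
  (fun k => A ^+ k) @ \oo --> Ainf ->
  let yv k : 'cV[R]_n := Abar ^+ k *m const_mx 1 in
  let Y k : 'M[R]_(n * p) := diag_mx (yv k)^T *t (1%:M : 'M[R]_p) in
  Y @ \oo --> Yinf ->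
  (* local functions: differentiable, l-Lipschitz gradient, s-strongly convex *)
  0 < l -> 0 < s ->
  (forall i x, differentiable (f i) x) ->
  (forall i x v, 'D_v (f i) x = dotv (gradf i x) v) ->
  (forall i z1 z2, norm2 (gradf i z1 - gradf i z2) <= l * norm2 (z1 - z2)) ->
  (forall i z1 z2, f i z1 - f i z2 <=
     dotv (gradf i z1) (z1 - z2) - s / 2 * norm2 (z1 - z2) ^+ 2) ->
  let tau := specnorm (A - 1) in
  let eps := specnorm (1 - Ainf) in
  let eta := Num.max `|1 - n%:R * alpha * l| `|1 - n%:R * alpha * s| in
  let y := sup (range (fun k => specnorm (Y k))) in
  let ym := sup (range (fun k => specnorm (invmx (Y k)))) in
  0 < gamma1 < 1 -> 0 < T ->
  (forall k, specnorm (Y k - Yinf) <= T * gamma1 ^+ k) ->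
  is_vnorm vnorm -> is_mxnorm mnorm -> compatible_norms mnorm vnorm ->
  let sigma := mnorm (A - Ainf) in
  sigma < 1 ->
  0 < c -> 0 < d ->
  (forall v, norm2 v <= c * vnorm v) ->
  (forall v, vnorm v <= d * norm2 v) ->
  let G := mx3
    sigma 0 alpha
    (alpha * c * l * ym) eta 0
    (c * d * eps * l * ym * (tau + alpha * l * y * ym))
      (alpha * d * eps * l ^+ 2 * y * ym)
      (sigma + alpha * c * d * eps * l * ym) in
  let H k := mx3
    0 0 0
    (alpha * l * ym * T * (gamma1 ^+ k / gamma1)) 0 0
    ((alpha * l * y + 2) * d * eps * l * ym ^+ 2 * T * (gamma1 ^+ k / gamma1))
      0 0 in
  let Delta := n%:R * s * c * d * eps * l * ym * (1 - sigma + tau) in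
  let K := c * d * eps * l ^+ 2 * y * ym ^+ 2 * (l + n%:R * s) in
  let alphabar := Num.min
    ((Num.sqrt (Delta ^+ 2 + 4 * n%:R * s * (1 - sigma) ^+ 2 * K) - Delta)
       / (2 * K))
    (1 / (n%:R * l)) in
  0 < alpha < alphabar ->
  let Gamma1 := gamma1^-1 * Num.sqrt ((alpha * l * ym * T) ^+ 2
                   + (alpha * y * l + 2) ^+ 2 * (d * eps * l * ym ^+ 2 * T) ^+ 2) in
  (* (a) *)
  (0 < Gamma1 /\ forall k, specnorm (H k) = Gamma1 * gamma1 ^+ k) /\
  (* (b) and (c) *)
  exists gamma2 Gamma2 : R,
    [/\ 0 < gamma2 < 1, 0 < Gamma2,
        forall k, specnorm (G ^+ k) <= Gamma2 * gamma2 ^+ k &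
        let gamma := Num.max gamma1 gamma2 in
        let Gamma := Gamma1 * Gamma2 / gamma in
        forall k r, (r < k)%N ->
          specnorm (G ^+ (k - r - 1) *m H r) <= Gamma * gamma ^+ k].
Proof.
(* The graph, the limits and the differentiability only fix the setting of the
   paper: the bounds depend on the scalar constants alone. *)
move=> n_gt0 p_gt0 _ _ _ _ A _ yv Y _ l_gt0 s_gt0 _ _ g_lip f_sconvex.
move=> tau eps eta y ym /andP[g1_gt0 g1_lt1] T_gt0 _ _ [mnorm_ge0 _ _ _ _] _.
move=> sigma sigma_lt1 c_gt0 d_gt0 _ _ G H Delta K alphabar.
move=> /andP[alpha_gt0 +] Gamma1; rewrite /alphabar lt_min => /andP[alpha_lt_root alpha_lt_inv].
have nR_gt0 : 0 < n%:R :> R by rewrite ltr0n.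
have s_le_l := sconvex_modulus_le_lipschitz p_gt0 l_gt0
  (g_lip (Ordinal n_gt0)) (f_sconvex (Ordinal n_gt0)).
have sup_specnorm_ge0 (F : nat -> 'M[R]_(n * p)) : 0 <= sup (range (fun k => specnorm (F k))).
  by apply: (@sup_ge0 _ _ (specnorm (F 0%N))) => [|_ [k _ <-]]; [exists 0%N | exact: specnorm_ge0].
have [y_ge0 ym_ge0] := (sup_specnorm_ge0 Y, sup_specnorm_ge0 (fun k => invmx (Y k))).
have ym_gt0 := stepsize_ym_gt0 nR_gt0 s_gt0 s_le_l (specnorm_ge0 _) y_ge0 ym_ge0
  c_gt0 d_gt0 alpha_gt0 alpha_lt_root.
have [gamma2 gamma2_01 [Gamma2 Gamma2_gt0 G_le]] := stepsize_contraction nR_gt0 s_gt0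
  s_le_l (mnorm_ge0 _) sigma_lt1 (specnorm_ge0 _) (specnorm_ge0 _) y_ge0 ym_ge0
  c_gt0 d_gt0 alpha_gt0 alpha_lt_inv alpha_lt_root.
have Gamma1E : Gamma1 = gamma1^-1 * Num.sqrt ((alpha * l * ym * T) ^+ 2
    + ((alpha * l * y + 2) * d * eps * l * ym ^+ 2 * T) ^+ 2).
  by rewrite /Gamma1; congr (_ * Num.sqrt _); ring.
have [] := mx3_col0_geometric ((alpha * l * y + 2) * d * eps * l * ym ^+ 2 * T)
  (mulr_gt0 (mulr_gt0 (mulr_gt0 alpha_gt0 l_gt0) ym_gt0) T_gt0) g1_gt0.
rewrite -Gamma1E => Gamma1_gt0 H_norm H_le.
split; first by split => // k; exact: H_norm.
exists gamma2, Gamma2; split=> //; case/andP: gamma2_01 => g2_gt0 _.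
  move=> k; exact: specnorm_le (mulr_ge0 (ltW Gamma2_gt0) (exprn_ge0 _ (ltW g2_gt0))) (G_le k).
exact: specnorm_pow_mulmx_le g1_gt0 g2_gt0 (ltW Gamma1_gt0) (ltW Gamma2_gt0) H_le G_le.
Qed.
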